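(* Let $(\mathbf X_1,\mathbf Y_1)$, $(\mathbf X_2,\mathbf Y_2)$ be general correlated sources and $(\mathbf X,\mathbf Y)$ the mixture $P_{X^nY^n}=\alpha_1P_{X_1^nY_1^n}+\alpha_2P_{X_2^nY_2^n}$ with $\alpha_1,\alpha_2>0$, $\alpha_1+\alpha_2=1$. If for both $i=1,2$ the sequence $\{\frac1n\log\frac1{P_{X_i^n|Y_i^n}(X_i^n|Y_i^n)}\}_{n\ge1}$ satisfies Condition (W), then $\{\frac1n\log\frac1{P_{X^n|Y^n}(X^n|Y^n)}\}_{n\ge1}$ also satisfies Condition (W).
   Context: A general correlated source $\{(X^n,Y^n)\}_{n\ge1}$ is an arbitrary sequence of pairs of random variables on $\mathcal X^n\times\mathcal Y^n$, $\mathcal X,\mathcal Y$ finite or countably infinite (no structural assumptions; marginal probabilities positive). Logs base 2. A sequence $\{Z_n\}$ of discrete real random variables ($Z_n$ taking values in a countable set $\mathcal Z_n$) satisfies Condition (W) if: (i) there is $M<\infty$ with $\mathbb E[Z_n]<M$ for all $n$; and (ii) whenever subsets $\mathcal A_n\subseteq\mathcal Z_n$ satisfy $P_{Z_n}(\mathcal A_n)\to0$, then $\lim_n\sum_{z\in\mathcal A_n}P_{Z_n}(z)|z|=0$. *)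

From HB Require Import structures.
From mathcomp Require Import all_boot all_order all_algebra.
From mathcomp Require Import all_classical all_reals all_analysis.
Set Implicit Arguments. Unset Strict Implicit. Unset Printing Implicit Defensive.
Import Order.TTheory GRing.Theory Num.Theory.
Local Open Scope classical_set_scope.
Local Open Scope ring_scope.

Section Defs.
Variable R : realType.

Definition log2 (x : R) : R := ln x / ln 2.

(** Discrete random variable Z = f(T), T with pmf p on a countable type:
    distribution P_Z(z) and P_Z(A) (pushforward). *)
Definition distZ (T : choiceType) (p : T -> R) (f : T -> R) (z : R) : \bar R :=
  \esum_(t in f @^-1` [set z]) (p t)%:E.
Definition probZ (T : choiceType) (p : T -> R) (f : T -> R) (A : set R) : \bar R :=
  \esum_(t in f @^-1` A) (p t)%:E.

Definition expZ (T : choiceType) (p : T -> R) (f : T -> R) : \bar R :=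
  (\esum_(z in range f) (distZ p f z * (Num.max z 0)%:E) -
   \esum_(z in range f) (distZ p f z * (Num.max (- z) 0)%:E))%E.

(** Condition (W) for a sequence of discrete random variables
    Z_k = f k (T_k), T_k ~ p k on a countable type Tk k. *)
Definition condW (Tk : nat -> countType) (p : forall k, Tk k -> R)
    (f : forall k, Tk k -> R) : Prop :=
  (exists M : R, forall k, (expZ (p k) (f k) < M%:E)%E) /\
  (forall A : nat -> set R, (forall k, A k `<=` range (f k)) ->
     (fun k => probZ (p k) (f k) (A k)) @ \oo --> 0%E ->
     (fun k => (\esum_(z in A k) (distZ (p k) (f k) z * (`|z|)%:E))%E) @ \oo --> 0%E).

(** A general correlated source: for each n a pmf on X^n x Y^n. *)
Definition src_type (X Y : countType) (n : nat) : countType :=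
  (n.-tuple X * n.-tuple Y)%type.

Definition margX (X Y : countType) n (P : src_type X Y n -> R) (x : n.-tuple X) : R :=
  fine (\esum_(y in [set: n.-tuple Y]) (P (x, y))%:E).
Definition margY (X Y : countType) n (P : src_type X Y n -> R) (y : n.-tuple Y) : R :=
  fine (\esum_(x in [set: n.-tuple X]) (P (x, y))%:E).

Definition is_source (X Y : countType) (P : forall n, src_type X Y n -> R) : Prop :=
  forall n,
    (forall t, 0 <= P n t) /\
    (\esum_(t in [set: src_type X Y n]) (P n t)%:E = 1)%E /\
    (forall x, 0 < margX (P n) x) /\ (forall y, 0 < margY (P n) y).

Definition condP (X Y : countType) n (P : src_type X Y n -> R) (t : src_type X Y n) : R :=
  P t / margY P t.2.

(** the spectral variable (1/n) log 1/P_{X^n|Y^n}(X^n|Y^n), for n = k+1 *)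
Definition entr_info (X Y : countType) (P : forall n, src_type X Y n -> R)
    (k : nat) (t : src_type X Y k.+1) : R :=
  (k.+1%:R)^-1 * log2 (condP (P k.+1) t)^-1.

Definition entr_seq_W (X Y : countType) (P : forall n, src_type X Y n -> R) : Prop :=
  condW (fun k => P k.+1) (entr_info P).

Definition mixture (X Y : countType) (a1 a2 : R) (P1 P2 : forall n, src_type X Y n -> R) :
  forall n, src_type X Y n -> R :=
  fun n t => a1 * P1 n t + a2 * P2 n t.

End Defs.

(* Condition (W) for nonnegative variables amounts to uniform integrability
   stated on the underlying laws: means are bounded, and the mean over events
   whose probability vanishes vanishes too.  One direction takes thresholds
   C_k tending to infinity so slowly that C_k P(E_k) -> 0, and controls the
   part above C_k by Markov's inequality and (W) itself.  This form is stable
   under mixing the laws.  Under P1, ln (1 + x) <= x shows that the spectral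
   variable of the mixture exceeds that of P1 by at most
   a2 / (a1 n ln 2) * P_{Y2}(y) / P_{Y1}(y), an error of mean a2 / (a1 n ln 2);
   hence it inherits uniform integrability from P1, and likewise under P2. *)

From HB Require Import structures.
From mathcomp Require Import all_boot all_order all_algebra.
From mathcomp Require Import all_classical all_reals all_analysis.
From mathcomp Require Import ring.
Import Order.TTheory GRing.Theory Num.Theory.
Local Open Scope classical_set_scope.
Local Open Scope ring_scope.

Section esum_lemmas.
Context {R : realType}.
Local Open Scope ereal_scope.

Lemma esumZl (T : choiceType) (S : set T) (a : T -> \bar R) (r : R) :
  (0 <= r)%R -> (forall t, S t -> 0 <= a t) ->
  \esum_(t in S) (r%:E * a t) = r%:E * \esum_(t in S) a t.
Proof.
move=> r0 a0; rewrite esum_mkcond [X in _ = _ * X]esum_mkcond.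
set b := fun t => if t \in S then a t else 0.
have b0 t : 0 <= b t by rewrite /b; case: ifPn => // /set_mem /a0.
rewrite (eq_esum (b := fun t => r%:E * b t)); last first.
  by move=> t _; rewrite /b; case: ifP; rewrite ?mule0.
rewrite /esum -ereal_supZl //; last first.
  by apply/set0P; exists 0; exists set0; [exact: fsets_set0|rewrite fsbig_set0].
congr ereal_sup; apply/seteqP; split => x /=.
  by move=> [A fA <-]; exists (\sum_(i \in A) b i) => //; [exists A|rewrite ge0_mule_fsumr].
by move=> [y [A fA <-] <-]; exists A => //; rewrite ge0_mule_fsumr.
Qed.

Lemma le_esum_subset (T : choiceType) (A B : set T) (a : T -> \bar R) :
  A `<=` B -> (forall t, B t -> 0 <= a t) ->
  \esum_(t in A) a t <= \esum_(t in B) a t.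
Proof.
move=> AB a0; rewrite esum_mkcond [X in _ <= X]esum_mkcond.
apply: le_esum => t _; case: ifPn => tA; first by rewrite (mem_set (AB _ (set_mem tA))).
by case: ifPn => // /set_mem /a0.
Qed.

Lemma esum_fibers (T : choiceType) (f : T -> R) (S : set R) (a : T -> \bar R) :
  (forall t, S (f t) -> 0 <= a t) ->
  \esum_(z in S) \esum_(t in f @^-1` [set z]) a t = \esum_(t in f @^-1` S) a t.
Proof.
move=> a0; rewrite esum_esum; last by move=> z t Sz /= ftz; apply: a0; rewrite ftz.
rewrite (reindex_esum (f @^-1` S) _ (fun t => (f t, t))) //; split.
- by move=> t /= St; split.
- by move=> t1 t2 _ _ [].
- by move=> [z t] /= [Sz ftz]; exists t => //=; rewrite ?ftz //; rewrite /preimage/= ftz.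
Qed.

Lemma esum_pair (A B : choiceType) (a : A * B -> \bar R) :
  (forall t, 0 <= a t) ->
  \esum_(t in [set: A * B]) a t = \esum_(y in [set: B]) \esum_(x in [set: A]) a (x, y).
Proof.
move=> a0; rewrite (esum_esum (I := [set: B]) (J := fun=> [set: A]) (a := fun y x => a (x, y))) //.
rewrite (reindex_esum [set: A * B] _ (fun t => (t.2, t.1))); last split.
- by apply: eq_esum => -[x y].
- by [].
- by move=> [x1 y1] [x2 y2] _ _ [] -> ->.
- by move=> [y x] _; exists (x, y).
Qed.

Lemma esum_lincomb (T : choiceType) (S : set T) (q1 q2 : T -> R) (a1 a2 : R) :
  (0 <= a1)%R -> (0 <= a2)%R -> (forall t, 0 <= q1 t)%R -> (forall t, 0 <= q2 t)%R ->
  \esum_(t in S) (a1 * q1 t + a2 * q2 t)%:E =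
  a1%:E * (\esum_(t in S) (q1 t)%:E) + a2%:E * (\esum_(t in S) (q2 t)%:E).
Proof.
move=> a10 a20 q10 q20.
rewrite (eq_esum (b := fun t => a1%:E * (q1 t)%:E + a2%:E * (q2 t)%:E)); last first.
  by move=> t _; rewrite EFinD !EFinM.
rewrite esumD; last 2 first.
- by move=> t _; rewrite -EFinM lee_fin mulr_ge0.
- by move=> t _; rewrite -EFinM lee_fin mulr_ge0.
by rewrite !esumZl // => t _; rewrite lee_fin.
Qed.

Lemma esum_distZ (T : choiceType) (p f : T -> R) (S : set R) (g : R -> R) :
  (forall t, 0 <= p t)%R -> (forall z, S z -> 0 <= g z)%R ->
  \esum_(z in S) (distZ p f z * (g z)%:E) = \esum_(t in f @^-1` S) (p t * g (f t))%:E.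
Proof.
move=> p0 g0; rewrite -esum_fibers => [|t /g0 ?]; last by rewrite lee_fin mulr_ge0.
apply: eq_esum => z Sz; rewrite /distZ muleC -esumZl ?g0 //; last first.
  by move=> t _; rewrite lee_fin.
by apply: eq_esum => t /= ->; rewrite muleC EFinM.
Qed.

Lemma ge0_expZE (T : choiceType) (p f : T -> R) :
  (forall t, 0 <= p t)%R -> (forall t, 0 <= f t)%R ->
  expZ p f = \esum_(t in [set: T]) (p t * f t)%:E.
Proof.
move=> p0 f0; rewrite /expZ [X in _ - X]esum1 => [|z [t _ <-]]; last first.
  by rewrite max_r ?mule0 // oppr_le0.
rewrite sube0 esum_distZ // => [|z _]; last by rewrite le_max lexx orbT.
have -> : f @^-1` range f = [set: T] by apply/seteqP; split => t //= _; exists t.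
by apply: eq_esum => t _; rewrite max_l.
Qed.

End esum_lemmas.

Section threshold.
Context {R : realType} {T : choiceType} {p f : T -> R}.
Hypotheses (p0 : forall t, 0 <= p t) (f0 : forall t, 0 <= f t).
Local Open Scope ereal_scope.

Lemma markov_esum (C : R) : (0 < C)%R ->
  \esum_(t in [set t | (C < f t)%R]) (p t)%:E <=
  (C^-1)%:E * \esum_(t in [set: T]) (p t * f t)%:E.
Proof.
move=> C0; have pf0 t : 0 <= (p t * f t)%:E by rewrite lee_fin mulr_ge0.
have C'0 : (0 <= C^-1)%R by rewrite invr_ge0 ltW.
rewrite -esumZl //; apply: le_trans _
    (@le_esum_subset _ _ _ _ (fun t => (C^-1)%:E * (p t * f t)%:E) (subsetT _) _)
  => [|t _]; last by rewrite mule_ge0.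
apply: le_esum => t /= Cf; rewrite -EFinM lee_fin mulrCA ler_peMr //.
by rewrite mulrC ler_pdivlMr // mul1r ltW.
Qed.

Lemma esum_le_threshold (E : set T) (C : R) : (0 <= C)%R ->
  \esum_(t in E) (p t * f t)%:E <=
  C%:E * (\esum_(t in E) (p t)%:E) + \esum_(t in [set t | (C < f t)%R]) (p t * f t)%:E.
Proof.
move=> C0; have pf0 t : 0 <= (p t * f t)%:E by rewrite lee_fin mulr_ge0.
rewrite -esumZl // => [|t _]; last by rewrite lee_fin.
rewrite esum_mkcond [X in X + _]esum_mkcond [X in _ + X]esum_mkcond -esumD; last 2 first.
- by move=> t _; case: ifP => // _; rewrite -EFinM lee_fin mulr_ge0.
- by move=> t _; case: ifP.
apply: le_esum => t _; case: ifPn => tE; last by rewrite add0e; case: ifP.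
have [fC|Cf] := leP (f t) C.
  rewrite (@le_trans _ _ (C%:E * (p t)%:E)) ?leeDl //; last by case: ifP.
  by rewrite -EFinM lee_fin mulrC ler_wpM2r.
by rewrite (@mem_set _ [set t | (C < f t)%R] t Cf) leeDr // mule_ge0 // lee_fin.
Qed.

End threshold.

Section cvge_lemmas.
Context {R : realType}.

Lemma cvge0_sqrt_rate (u : nat -> \bar R) :
  (forall k, 0 <= u k)%E -> u @ \oo --> 0%E ->
  exists2 s : nat -> R, (forall k, 0 < s k) &
    s @ \oo --> 0 /\ \forall k \near \oo, ((s k)^-1%:E * u k <= (s k)%:E)%E.
Proof.
move=> u0 /fine_cvgP [ufin ucvg].
pose q k := fine (u k) + k.+1%:R^-1.
have q0 k : 0 < q k by rewrite ltr_wpDl ?fine_ge0 // invr_gt0.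
exists (fun k => Num.sqrt (q k)) => [k|]; first by rewrite sqrtr_gt0.
split.
  rewrite -sqrtr0; apply: (cvg_comp q (@Num.sqrt R)); last exact: sqrt_continuous.
  by rewrite -[0]addr0; apply: cvgD => //; exact: (@cvg_harmonic R).
near=> k; have ufk : u k \is a fin_num by near: k.
rewrite -(fineK ufk) -EFinM lee_fin mulrC ler_pdivrMr ?sqrtr_gt0 //.
by rewrite -expr2 sqr_sqrtr ?ltW // /q ltrDl invr_gt0.
Unshelve. all: by end_near.
Qed.

Local Open Scope ereal_scope.

Lemma cvg_harmonicMr (c : R) :
  (k.+1%:R^-1 * c)%:E @[k --> \oo] --> (0 : \bar R).
Proof.
apply: cvg_EFin; first by near=> k.
have := @cvgMr_tmp R nat _ _ (fun k => k.+1%:R^-1)%R 0%R c (@cvg_harmonic R).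
by rewrite mul0r; exact.
Unshelve. all: by end_near.
Qed.

Lemma cvge0_lincomb {a b : R} {u v : nat -> \bar R} :
  (0 < a)%R -> (0 < b)%R -> (forall k, 0 <= u k) -> (forall k, 0 <= v k) ->
  a%:E * u k + b%:E * v k @[k --> \oo] --> 0 -> u @ \oo --> 0 /\ v @ \oo --> 0.
Proof.
have cvg0l (a' b' : R) (u' v' : nat -> \bar R) : (0 < a')%R -> (0 < b')%R ->
    (forall k, 0 <= u' k) -> (forall k, 0 <= v' k) ->
    a'%:E * u' k + b'%:E * v' k @[k --> \oo] --> 0 -> u' @ \oo --> 0.
  move=> a0 b0 u0 v0 cvg_uv.
  apply: (@squeeze_cvge _ _ _ _ (fun=> 0) _
    (fun k => a'^-1%:E * (a'%:E * u' k + b'%:E * v' k))).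
  - near=> k; rewrite u0 /=.
    apply: (@le_trans _ _ (a'^-1%:E * (a'%:E * u' k))).
      by rewrite muleA -EFinM mulVf ?mul1e // gt_eqF.
    by rewrite lee_pmul2l ?lte_fin ?invr_gt0 // leeDl // mule_ge0 // lee_fin ltW.
  - exact: cvg_cst.
  - by rewrite -(mule0 a'^-1%:E); exact: cvgeZl.
move=> a0 b0 u0 v0 cvg_uv; split; first exact: cvg0l cvg_uv.
apply: (cvg0l b a v u) => //.
suff -> : (fun k => b%:E * v k + a%:E * u k) = (fun k => a%:E * u k + b%:E * v k) by [].
by apply/funext => k; rewrite addeC.
Unshelve. all: by end_near.
Qed.

End cvge_lemmas.

Section uniform_integrability.
Context {R : realType} {Tk : nat -> countType}.
Local Open Scope ereal_scope.

Definition uniformly_integrable (p f : forall k, Tk k -> R) : Prop :=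
  (exists M : R, forall k, \esum_(t in [set: Tk k]) (p k t * f k t)%:E <= M%:E) /\
  forall E : forall k, set (Tk k),
    \esum_(t in E k) (p k t)%:E @[k --> \oo] --> 0 ->
    \esum_(t in E k) (p k t * f k t)%:E @[k --> \oo] --> 0.

Variables p f : forall k, Tk k -> R.
Hypotheses (p0 : forall k t, (0 <= p k t)%R) (f0 : forall k t, (0 <= f k t)%R).

Lemma condW_tail_cvg0 (C : nat -> R) : condW p f ->
  \esum_(t in [set t | (C k < f k t)%R]) (p k t)%:E @[k --> \oo] --> 0 ->
  \esum_(t in [set t | (C k < f k t)%R]) (p k t * f k t)%:E @[k --> \oo] --> 0.
Proof.
move=> [_ W] tail_prob.
pose A k := [set z | range (f k) z /\ (C k < z)%R].
have preA k : f k @^-1` A k = [set t | (C k < f k t)%R].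
  by apply/seteqP; split => t /=; [case|split => //; exists t].
rewrite [X in X @ _ --> _](_ : _ = fun k => \esum_(z in A k) (distZ (p k) (f k) z * `|z|%:E)).
  apply: W => [k z []//|].
  suff -> : (fun k => probZ (p k) (f k) (A k)) =
    (fun k => \esum_(t in [set t | (C k < f k t)%R]) (p k t)%:E) by [].
  by apply/funext => k; rewrite /probZ preA.
apply/funext => k; rewrite esum_distZ // preA.
by apply: eq_esum => t _; rewrite ger0_norm.
Qed.

Lemma condW_uniformly_integrable : condW p f -> uniformly_integrable p f.
Proof.
move=> Wpf; have [[M HM] _] := Wpf.
have Mbound k : \esum_(t in [set: Tk k]) (p k t * f k t)%:E <= M%:E.
  by rewrite -ge0_expZE // ltW.
split=> [|E probE]; first by exists M.
have probE0 k : 0 <= \esum_(t in E k) (p k t)%:E by apply: esum_ge0 => t _; rewrite lee_fin.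
have [s s0 [scvg ratE]] := cvge0_sqrt_rate _ probE0 probE.
pose C k := (s k)^-1%R.
have tail_prob : \esum_(t in [set t | (C k < f k t)%R]) (p k t)%:E @[k --> \oo] --> 0.
  apply: (@squeeze_cvge _ _ _ _ (fun=> 0) _ (fun k => (s k * M)%:E)).
  - near=> k; rewrite esum_ge0 => [/=|t _]; last by rewrite lee_fin.
    apply: le_trans (markov_esum (p0 k) (f0 k) (C k) _) _; first by rewrite invr_gt0.
    by rewrite /C invrK EFinM lee_pmul2l ?lte_fin.
  - exact: cvg_cst.
  - apply: cvg_EFin; first by near=> k.
    by rewrite -(mul0r M); exact: cvgMr_tmp.
have tail := condW_tail_cvg0 _ Wpf tail_prob.
apply: (@squeeze_cvge _ _ _ _ (fun=> 0) _
  (fun k => (s k)%:E + \esum_(t in [set t | (C k < f k t)%R]) (p k t * f k t)%:E)).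
- near=> k; rewrite esum_ge0 => [/=|t _]; last by rewrite lee_fin mulr_ge0.
  apply: le_trans (esum_le_threshold (p0 k) (f0 k) (E k) (C k) _) _.
    by rewrite ltW ?invr_gt0.
  by rewrite leeD2r //; near: k.
- exact: cvg_cst.
- rewrite -[0]adde0; apply: cvgeD => //.
  by apply: cvg_EFin; first by near=> k.
Unshelve. all: by end_near.
Qed.

Lemma uniformly_integrable_condW : uniformly_integrable p f -> condW p f.
Proof.
move=> [[M HM] tail]; split=> [|A _ probA].
  by exists (M + 1)%R => k; rewrite ge0_expZE // (le_lt_trans (HM k)) // lte_fin ltrDl.
rewrite [X in X @ _ --> _](_ : _ = fun k => \esum_(t in f k @^-1` A k) (p k t * f k t)%:E).
  exact: tail.
by apply/funext => k; rewrite esum_distZ //; apply: eq_esum => t _; rewrite ger0_norm.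
Qed.

End uniform_integrability.

Section uniformly_integrable_closure.
Context {R : realType} {Tk : nat -> countType}.
Local Open Scope ereal_scope.

Lemma esum_dominated_le {T : choiceType} (E : set T) (p f g h : T -> R) :
  (forall t, 0 <= p t)%R -> (forall t, 0 <= f t)%R -> (forall t, 0 <= h t)%R ->
  (forall t, p t * g t <= p t * f t + p t * h t)%R ->
  \esum_(t in E) (p t * g t)%:E <=
  \esum_(t in E) (p t * f t)%:E + \esum_(t in [set: T]) (p t * h t)%:E.
Proof.
move=> p0 f0 h0 le_gfh.
have ph0 t : 0 <= (p t * h t)%:E by rewrite lee_fin mulr_ge0.
apply: (@le_trans _ _ (\esum_(t in E) ((p t * f t)%:E + (p t * h t)%:E))).
  by apply: le_esum => t _; rewrite -EFinD lee_fin.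
rewrite esumD => [|t _|t _] //; last by rewrite lee_fin mulr_ge0.
by rewrite leeD2l // le_esum_subset.
Qed.

Lemma uniformly_integrable_dominated (p f g h : forall k, Tk k -> R) (c : R) :
  (forall k t, 0 <= p k t)%R -> (forall k t, 0 <= f k t)%R ->
  (forall k t, 0 <= g k t)%R -> (forall k t, 0 <= h k t)%R -> (0 <= c)%R ->
  (forall k t, p k t * g k t <= p k t * f k t + p k t * h k t)%R ->
  (forall k, \esum_(t in [set: Tk k]) (p k t * h k t)%:E <= (k.+1%:R^-1 * c)%:E) ->
  uniformly_integrable p f -> uniformly_integrable p g.
Proof.
move=> p0 f0 g0 h0 c0 le_gfh Eh [[M HM] tail].
have le_g k (E : set (Tk k)) :=
  le_trans (esum_dominated_le E _ _ _ _ (p0 k) (f0 k) (h0 k) (le_gfh k)) (leeD2l _ (Eh k)).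
split=> [|E probE].
  exists (M + c)%R => k; apply: le_trans (le_g k _) _.
  by rewrite EFinD leeD // lee_fin ler_piMl // invf_le1 ?ltr0n ?ler1n.
apply: (@squeeze_cvge _ _ _ _ (fun=> 0) _
  (fun k => \esum_(t in E k) (p k t * f k t)%:E + (k.+1%:R^-1 * c)%:E)).
- by near=> k; rewrite le_g esum_ge0 // => t _; rewrite lee_fin mulr_ge0.
- exact: cvg_cst.
- by rewrite -[0]adde0; apply: cvgeD => //; [exact: tail|exact: cvg_harmonicMr].
Unshelve. all: by end_near.
Qed.

Lemma uniformly_integrable_mixture (p1 p2 f : forall k, Tk k -> R) (a1 a2 : R) :
  (0 < a1)%R -> (0 < a2)%R ->
  (forall k t, 0 <= p1 k t)%R -> (forall k t, 0 <= p2 k t)%R -> (forall k t, 0 <= f k t)%R ->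
  uniformly_integrable p1 f -> uniformly_integrable p2 f ->
  uniformly_integrable (fun k t => a1 * p1 k t + a2 * p2 k t)%R f.
Proof.
move=> a10 a20 p10 p20 f0 [[M1 HM1] tail1] [[M2 HM2] tail2].
have esum_mix k (E : set (Tk k)) q : (forall t, 0 <= q t)%R ->
    \esum_(t in E) ((a1 * p1 k t + a2 * p2 k t) * q t)%:E =
    a1%:E * (\esum_(t in E) (p1 k t * q t)%:E) + a2%:E * (\esum_(t in E) (p2 k t * q t)%:E).
  move=> q0; rewrite -esum_lincomb ?ltW // => [|t|t]; last 2 first.
  - exact: mulr_ge0.
  - exact: mulr_ge0.
  by apply: eq_esum => t _; congr (_%:E); ring.
have esum_ge0p (q : forall k, Tk k -> R) (E : forall k, set (Tk k)) :
    (forall k t, 0 <= q k t)%R -> forall k, 0 <= \esum_(t in E k) (q k t)%:E.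
  by move=> q0 k; apply: esum_ge0 => t _; rewrite lee_fin.
split=> [|E probE].
  exists (a1 * M1 + a2 * M2)%R => k; rewrite esum_mix // EFinD !EFinM.
  by rewrite leeD // lee_pmul2l ?lte_fin.
have [cvgP1 cvgP2] : \esum_(t in E k) (p1 k t)%:E @[k --> \oo] --> 0 /\
    \esum_(t in E k) (p2 k t)%:E @[k --> \oo] --> 0.
  apply: (cvge0_lincomb a10 a20 (esum_ge0p _ E p10) (esum_ge0p _ E p20)).
  by rewrite -(funext (fun k => esum_lincomb _ (E k) _ _ _ _ (ltW a10) (ltW a20) (p10 k) (p20 k))).
rewrite [X in X @ _ --> _](_ : _ = fun k =>
    a1%:E * (\esum_(t in E k) (p1 k t * f k t)%:E) +
    a2%:E * (\esum_(t in E k) (p2 k t * f k t)%:E)); last first.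
  by apply/funext => k; exact: esum_mix.
have -> : (0 : \bar R) = a1%:E * 0 + a2%:E * 0 by rewrite !mule0 adde0.
by apply: cvgeD => //; apply: cvgeZl => //; [exact: tail1|exact: tail2].
Qed.

End uniformly_integrable_closure.

Lemma log2_inv_ratio_ge0 {R : realType} (a m : R) :
  0 <= a -> a <= m -> 0 <= log2 ((a / m)^-1).
Proof.
move=> a0 am; rewrite /log2; apply: divr_ge0; last by rewrite ln_ge0 // ler1n.
have [->|a_neq0] := eqVneq a 0; first by rewrite mul0r invr0 ln0.
have a_gt0 : 0 < a by rewrite lt0r a_neq0.
by rewrite invf_div ln_ge0 // ler_pdivlMr ?mul1r // (lt_le_trans a_gt0).
Qed.

(* ln(1 + x) <= x applied to x = a2 m2 / (a1 m1), after dropping a2 p2 from the numerator. *)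
Lemma log2_mixture_le {R : realType} (a1 a2 p1 p2 m1 m2 : R) :
  0 < a1 -> 0 <= a2 -> 0 < p1 -> 0 <= p2 -> p1 <= m1 -> 0 <= m2 ->
  log2 (((a1 * p1 + a2 * p2) / (a1 * m1 + a2 * m2))^-1) <=
  log2 ((p1 / m1)^-1) + a2 / (a1 * ln 2) * (m2 / m1).
Proof.
move=> a10 a20 p10 p20 pm m20.
have m10 : 0 < m1 by apply: lt_le_trans pm.
have l2 : 0 < ln (2 : R) by rewrite ln_gt0 // ltr1n.
have P0 : 0 < a1 * p1 + a2 * p2 by rewrite ltr_wpDr ?mulr_ge0 ?mulr_gt0.
have M0 : 0 < a1 * m1 + a2 * m2 by rewrite ltr_wpDr ?mulr_ge0 ?mulr_gt0.
have x0 : 0 <= a2 * m2 / (a1 * m1) by rewrite divr_ge0 ?mulr_ge0 // ltW // mulr_gt0.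
have drop_p2 : ln ((a1 * m1 + a2 * m2) / (a1 * p1 + a2 * p2)) <=
    ln ((a1 * m1 + a2 * m2) / (a1 * p1)).
  rewrite ler_ln ?posrE ?divr_gt0 ?mulr_gt0 //.
  by rewrite ler_wpM2l ?(ltW M0) // lef_pV2 ?posrE ?mulr_gt0 // lerDl mulr_ge0.
have split_ratio : (a1 * m1 + a2 * m2) / (a1 * p1) = (m1 / p1) * (1 + a2 * m2 / (a1 * m1)).
  by field; rewrite !gt_eqF.
have ln_bound : ln ((a1 * m1 + a2 * m2) / (a1 * p1 + a2 * p2)) <=
    ln (m1 / p1) + a2 * m2 / (a1 * m1).
  apply: (le_trans drop_p2); rewrite split_ratio lnM ?posrE ?divr_gt0 ?ltr_wpDr //.
  by rewrite lerD2l le_ln1Dx // (lt_le_trans (ltrN10 R) x0).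
rewrite /log2 !invf_div.
have -> : ln (m1 / p1) / ln 2 + a2 / (a1 * ln 2) * (m2 / m1) =
    (ln (m1 / p1) + a2 * m2 / (a1 * m1)) / ln 2 by field; rewrite !gt_eqF.
by rewrite ler_wpM2r // invr_ge0 ltW.
Qed.

Section sources.
Context {R : realType} {X Y : countType}.
Local Open Scope ereal_scope.

Section marginal.
Context {n : nat} {P : src_type X Y n -> R}.
Hypotheses (P0 : forall t, (0 <= P t)%R)
  (Psum1 : \esum_(t in [set: src_type X Y n]) (P t)%:E = 1).

Lemma esum_margY :
  \esum_(y in [set: n.-tuple Y]) \esum_(x in [set: n.-tuple X]) (P (x, y))%:E = 1.
Proof. by rewrite -Psum1 esum_pair // => t; rewrite lee_fin. Qed.

Lemma margYE y : (margY P y)%:E = \esum_(x in [set: n.-tuple X]) (P (x, y))%:E.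
Proof.
have col0 y' : 0 <= \esum_(x in [set: n.-tuple X]) (P (x, y'))%:E.
  by apply: esum_ge0 => x _; rewrite lee_fin.
have col_le1 : \esum_(x in [set: n.-tuple X]) (P (x, y))%:E <= 1.
  rewrite -esum_margY -(esum_set1 (a := fun y' => \esum_(x in _) (P (x, y'))%:E) (col0 y)).
  exact: le_esum_subset (subsetT _) (fun y' _ => col0 y').
by rewrite /margY fineK // ge0_fin_numE // (le_lt_trans col_le1) // ltry.
Qed.

Lemma margY_ge0 y : (0 <= margY P y)%R.
Proof. by rewrite -lee_fin margYE; apply: esum_ge0 => x _; rewrite lee_fin. Qed.

Lemma le_margY t : (P t <= margY P t.2)%R.
Proof.
case: t => x y /=; rewrite -lee_fin margYE.
rewrite -(esum_set1 (a := fun x => (P (x, y))%:E) (t := x)) ?lee_fin //.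
by apply: le_esum_subset (subsetT _) _ => x' _; rewrite lee_fin.
Qed.

End marginal.

Lemma esum_margY_ratio n (P Q : src_type X Y n -> R) (K : R) :
  (forall t, 0 <= P t)%R -> \esum_(t in [set: src_type X Y n]) (P t)%:E = 1 ->
  (forall t, 0 <= Q t)%R -> \esum_(t in [set: src_type X Y n]) (Q t)%:E = 1 ->
  (forall y, 0 < margY P y)%R -> (0 <= K)%R ->
  \esum_(t in [set: src_type X Y n]) (P t * (K * (margY Q t.2 / margY P t.2)))%:E = K%:E.
Proof.
move=> P0 Psum1 Q0 Qsum1 mP0 K0.
have ratio0 y : (0 <= K * (margY Q y / margY P y))%R.
  by rewrite mulr_ge0 // divr_ge0 ?(margY_ge0 Q0 Qsum1) // ltW.
rewrite esum_pair => [|t]; last by rewrite lee_fin mulr_ge0.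
rewrite (eq_esum (b := fun y => K%:E * \esum_(x in [set: n.-tuple X]) (Q (x, y))%:E)).
  rewrite esumZl ?(esum_margY Q0 Qsum1) ?mule1 // => y _.
  by apply: esum_ge0 => x _; rewrite lee_fin.
move=> y _ /=; rewrite -(margYE Q0 Qsum1) -EFinM.
rewrite (eq_esum (b := fun x => (K * (margY Q y / margY P y))%:E * (P (x, y))%:E)); last first.
  by move=> x _; rewrite -EFinM mulrC.
rewrite esumZl // => [|x _]; last by rewrite lee_fin.
by rewrite -(margYE P0 Psum1) -EFinM -!mulrA mulVf ?mulr1 // gt_eqF.
Qed.

Lemma mixtureC (P1 P2 : forall n, src_type X Y n -> R) (a1 a2 : R) :
  mixture a1 a2 P1 P2 = mixture a2 a1 P2 P1.
Proof.
by apply: functional_extensionality_dep => n; apply/funext => t; rewrite /mixture addrC.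
Qed.

Section mixture.
Context {P1 P2 : forall n, src_type X Y n -> R} {a1 a2 : R}.
Hypotheses (a10 : (0 <= a1)%R) (a20 : (0 <= a2)%R).
Hypotheses (P10 : forall n t, (0 <= P1 n t)%R) (P20 : forall n t, (0 <= P2 n t)%R).
Hypotheses (T1 : forall n, \esum_(t in [set: src_type X Y n]) (P1 n t)%:E = 1)
  (T2 : forall n, \esum_(t in [set: src_type X Y n]) (P2 n t)%:E = 1).

Lemma mixture_ge0 n t : (0 <= mixture a1 a2 P1 P2 (n := n) t)%R.
Proof. by rewrite /mixture addr_ge0 // mulr_ge0. Qed.

Lemma esum_mixture n : (a1 + a2 = 1)%R ->
  \esum_(t in [set: src_type X Y n]) (mixture a1 a2 P1 P2 t)%:E = 1.
Proof. by move=> a12; rewrite esum_lincomb // T1 T2 !mule1 -EFinD a12. Qed.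

Lemma margY_mixture n y :
  margY (mixture a1 a2 P1 P2 (n := n)) y = (a1 * margY (P1 n) y + a2 * margY (P2 n) y)%R.
Proof.
rewrite {1}/margY esum_lincomb //.
by rewrite -(margYE (P10 n) (T1 n)) -(margYE (P20 n) (T2 n)) -!EFinM -EFinD.
Qed.

End mixture.
End sources.

Lemma entr_info_ge0 {R : realType} {X Y : countType} {P : forall n, src_type X Y n -> R} :
  (forall n t, 0 <= P n t) ->
  (forall n, (\esum_(t in [set: src_type X Y n]) (P n t)%:E = 1)%E) ->
  forall k (t : src_type X Y k.+1), 0 <= entr_info P t.
Proof.
move=> P0 Psum1 k t; rewrite /entr_info mulr_ge0 ?invr_ge0 //.
exact: (log2_inv_ratio_ge0 _ _ (P0 _ t) (le_margY (P0 _) (Psum1 _) t)).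
Qed.

Lemma entr_info_mixture_uniformly_integrable {R : realType} {X Y : countType}
    (P1 P2 : forall n, src_type X Y n -> R) (a1 a2 : R) :
  is_source P1 -> is_source P2 -> 0 < a1 -> 0 <= a2 -> a1 + a2 = 1 ->
  entr_seq_W P1 ->
  uniformly_integrable (fun k => P1 k.+1) (entr_info (mixture a1 a2 P1 P2)).
Proof.
move=> S1 S2 a10 a20 a12 W1.
have P10 n t : 0 <= P1 n t by case: (S1 n).
have P20 n t : 0 <= P2 n t by case: (S2 n).
have T1 n : (\esum_(t in [set: src_type X Y n]) (P1 n t)%:E = 1)%E by case: (S1 n) => _ [].
have T2 n : (\esum_(t in [set: src_type X Y n]) (P2 n t)%:E = 1)%E by case: (S2 n) => _ [].
have M1 n y : 0 < margY (P1 n) y by case: (S1 n) => _ [_ [_]].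
pose c := a2 / (a1 * ln 2).
have c0 : 0 <= c by rewrite divr_ge0 ?mulr_ge0 ?ln_ge0 ?ler1n // ltW.
pose h k (t : src_type X Y k.+1) := k.+1%:R^-1 * c * (margY (P2 k.+1) t.2 / margY (P1 k.+1) t.2).
apply: (@uniformly_integrable_dominated _ _ _ (entr_info P1) _ h c) => //.
- exact: entr_info_ge0.
- apply: entr_info_ge0; first exact: (mixture_ge0 (ltW a10) a20 P10 P20).
  by move=> n; apply: (esum_mixture (ltW a10) a20 P10 P20 T1 T2).
- move=> k t; apply: mulr_ge0; first by rewrite mulr_ge0 // invr_ge0.
  by rewrite divr_ge0 ?(margY_ge0 (P20 _) (T2 _)) // ltW.
- move=> k t; have [->|P1t_neq0] := eqVneq (P1 k.+1 t) 0; first by rewrite !mul0r addr0.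
  rewrite -mulrDr ler_wpM2l // /entr_info /h -mulrA -mulrDr ler_wpM2l ?invr_ge0 //.
  rewrite /condP (margY_mixture (ltW a10) a20 P10 P20 T1 T2); apply: log2_mixture_le => //.
  + by rewrite lt0r P1t_neq0 P10.
  + exact: (le_margY (P10 _) (T1 _)).
  + exact: (margY_ge0 (P20 _) (T2 _)).
- move=> k; rewrite /h (esum_margY_ratio _ _ _ _ (P10 _) (T1 _) (P20 _) (T2 _) (M1 _)) //.
  by rewrite mulr_ge0 // invr_ge0.
- exact: (condW_uniformly_integrable _ _ (fun k => P10 k.+1) (entr_info_ge0 P10 T1) W1).
Qed.

Theorem lemma1 (R : realType) (X Y : countType)
  (P1 P2 : forall n, src_type X Y n -> R) (a1 a2 : R) :
  is_source P1 -> is_source P2 ->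
  0 < a1 -> 0 < a2 -> a1 + a2 = 1 ->
  entr_seq_W P1 -> entr_seq_W P2 ->
  entr_seq_W (mixture a1 a2 P1 P2).
Proof.
move=> S1 S2 a10 a20 a12 W1 W2.
have P10 n t : 0 <= P1 n t by case: (S1 n).
have P20 n t : 0 <= P2 n t by case: (S2 n).
have T1 n : (\esum_(t in [set: src_type X Y n]) (P1 n t)%:E = 1)%E by case: (S1 n) => _ [].
have T2 n : (\esum_(t in [set: src_type X Y n]) (P2 n t)%:E = 1)%E by case: (S2 n) => _ [].
have mix_ge0 := mixture_ge0 (ltW a10) (ltW a20) P10 P20.
have entr_ge0 := entr_info_ge0 mix_ge0
  (fun n => esum_mixture (ltW a10) (ltW a20) P10 P20 T1 T2 n a12).
apply: uniformly_integrable_condW => //.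
apply: uniformly_integrable_mixture => //.
- by apply: entr_info_mixture_uniformly_integrable => //; exact: ltW.
- rewrite mixtureC; apply: entr_info_mixture_uniformly_integrable => //.
  + exact: ltW.
  + by rewrite addrC.
Qed.
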